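(* Let $L>0$, $N\ge 1$, grid points $x_i$, $i=0,\dots,N$, evenly spaced on $[0,L]$, and let $\mathbf D,\mathbf H$ be $(N+1)\times(N+1)$ real matrices with $\mathbf H$ diagonal and positive definite, $\mathbf H\mathbf D=\mathbf Q$, and $\mathbf u^T(\mathbf Q+\mathbf Q^T)\mathbf v=u_Nv_N-u_0v_0$ for all $\mathbf u,\mathbf v\in\mathbb{R}^{N+1}$. Let $\bar{\mathbf c}=(\bar c_0,\dots,\bar c_N)^T$ with all $\bar c_i>0$, and $\mathbf a,\mathbf b,\mathbf c,\mathbf d\in\mathbb{R}^{N+1}$. Define $\mathbf\Lambda=\mathrm{diag}(-\bar{\mathbf c},\bar{\mathbf c})$, $\mathbf D_2=\mathbf I_2\otimes\mathbf D$, $\mathbf H_2=\mathbf I_2\otimes\mathbf H$, $$\mathbf M_{\bar c}=\begin{pmatrix}-\mathrm{diag}(\mathbf D\bar{\mathbf c})&0\\0&\mathrm{diag}(\mathbf D\bar{\mathbf c})\end{pmatrix},\quad \tilde{\mathbf B}=\begin{pmatrix}\mathrm{diag}(\mathbf a)&\mathrm{diag}(\mathbf b)\\\mathrm{diag}(\mathbf c)&\mathrm{diag}(\mathbf d)\end{pmatrix},$$ and $\mathbf\Lambda_D=\tfrac12(\mathbf\Lambda\mathbf D_2+\mathbf D_2\mathbf\Lambda)-\tfrac12\mathbf M_{\bar c}$. Let $R_0,R_L\in[-1,1]$ and set $\alpha_0=-\bar c_0$, $\alpha_L=-\bar c_N$. Let $\mathbf W(t)=(\mathbf w_1(t)^T,\mathbf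 w_2(t)^T)^T\in\mathbb{R}^{2(N+1)}$, with components $w_{k,i}$, be a solution of $$\mathbf W_t+\mathbf\Lambda_D\mathbf W=\tilde{\mathbf B}\mathbf W+\alpha_0\mathbf H_2^{-1}(w_{2,0}-R_0w_{1,0})(E_2\otimes e_0)+\alpha_L\mathbf H_2^{-1}(w_{1,N}-R_Lw_{2,N})(E_1\otimes e_N),$$ where $E_j\in\mathbb{R}^2$ and $e_j\in\mathbb{R}^{N+1}$ are standard basis vectors. Let $\mathbf E_h=\mathbf W^T\mathbf H_2\mathbf W$ and let $\|\cdot\|_{\mathbf H}$ denote the operator norm induced by the inner product $(\mathbf U,\mathbf V)_{\mathbf H}=\mathbf U^T\mathbf H_2\mathbf V$. Then $$\frac{d\mathbf E_h}{dt}\le 2\big(\|\tilde{\mathbf B}\|_{\mathbf H}+\|\mathbf M_{\bar c}\|_{\mathbf H}\big)\mathbf E_h .$$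
   Context: This is the summation-by-parts / simultaneous-approximation-term (SBP-SAT) semi-discretization of $W_t+\Lambda(x)W_x=\tilde B(x)W$, $\Lambda=\mathrm{diag}(-\bar c,\bar c)$, with boundary conditions $w_2(0,t)=R_0w_1(0,t)$, $w_1(L,t)=R_Lw_2(L,t)$ and zero boundary and source data; $\bar{\mathbf c},\mathbf a,\dots$ are the grid values of the coefficient functions. *)

From HB Require Import structures.
From mathcomp Require Import all_boot all_order all_algebra.
From mathcomp Require Import all_classical all_reals all_analysis.
Set Implicit Arguments. Unset Strict Implicit. Unset Printing Implicit Defensive.
Import Order.TTheory GRing.Theory Num.Theory.
Import numFieldNormedType.Exports.
Local Open Scope ring_scope.
Local Open Scope classical_set_scope.

Section SBP.
Variable R : realType.

Definition kron2 n (A : 'M[R]_n) : 'M[R]_(n + n) := block_mx A 0 0 A.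

Definition posdef n (A : 'M[R]_n) : Prop :=
  forall u : 'cV[R]_n, u != 0 -> 0 < (u^T *m A *m u) 0 0.

Definition diagc n (v : 'cV[R]_n) : 'M[R]_n := diag_mx v^T.

Definition Lam n (cb : 'cV[R]_n) : 'M[R]_(n + n) :=
  block_mx (- diagc cb) 0 0 (diagc cb).

Definition Mcbar n (D : 'M[R]_n) (cb : 'cV[R]_n) : 'M[R]_(n + n) :=
  block_mx (- diagc (D *m cb)) 0 0 (diagc (D *m cb)).

Definition Btilde n (a b c d : 'cV[R]_n) : 'M[R]_(n + n) :=
  block_mx (diagc a) (diagc b) (diagc c) (diagc d).

Definition LamD n (D : 'M[R]_n) (cb : 'cV[R]_n) : 'M[R]_(n + n) :=
  2^-1 *: (Lam cb *m kron2 D + kron2 D *m Lam cb) - 2^-1 *: Mcbar D cb.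

Definition energy n (H : 'M[R]_n) (W : 'cV[R]_(n + n)) : R :=
  (W^T *m kron2 H *m W) 0 0.

Definition normH n (H : 'M[R]_n) (W : 'cV[R]_(n + n)) : R :=
  Num.sqrt (energy H W).

Definition opnormH n (H : 'M[R]_n) (A : 'M[R]_(n + n)) : R :=
  sup [set r : R | exists U : 'cV[R]_(n + n),
          U != 0 /\ r = normH H (A *m U) / normH H U].

(* right-hand side of the semi-discrete system, solved for W_t *)
Definition sbp_rhs (N : nat) (D H : 'M[R]_N.+1) (cb a b c d : 'cV[R]_N.+1)
    (R0 RL : R) (W : 'cV[R]_(N.+1 + N.+1)) : 'cV[R]_(N.+1 + N.+1) :=
  let w1 i := W (lshift N.+1 i) 0 in
  let w2 i := W (rshift N.+1 i) 0 in
  let alpha0 := - cb ord0 0 in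
  let alphaL := - cb ord_max 0 in
  let e0 : 'cV[R]_N.+1 := delta_mx ord0 0 in
  let eN : 'cV[R]_N.+1 := delta_mx ord_max 0 in
  - (LamD D cb *m W) + Btilde a b c d *m W
  + (alpha0 * (w2 ord0 - R0 * w1 ord0)) *: (invmx (kron2 H) *m col_mx 0 e0)
  + (alphaL * (w1 ord_max - RL * w2 ord_max)) *: (invmx (kron2 H) *m col_mx eN 0).

End SBP.

(* The energy is the squared norm for the weighted inner product <U, V> = U^T H_2 V,
   whose weight is diagonal and positive, so dE/dt = 2 <W, W_t>.  Paired with W, the
   symmetrised transport term (Lambda D_2 + D_2 Lambda)/2 contributes, by the SBP
   property of H D, only boundary values of the two characteristic variables.  With
   the SAT penalties they add up to -c (x^2 + y^2 - 2 R x y)/2 at each end, which is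
   non-positive because |R| <= 1.  What remains, 2 <W, B W> + <W, M W>, is bounded
   by Cauchy-Schwarz through the H-operator norms. *)

From HB Require Import structures.
From mathcomp Require Import all_boot all_order all_algebra.
From mathcomp Require Import all_classical all_reals all_analysis.
From mathcomp Require Import ring lra.
Set Implicit Arguments. Unset Strict Implicit. Unset Printing Implicit Defensive.
Import Order.TTheory GRing.Theory Num.Theory.
Import numFieldNormedType.Exports.
Local Open Scope ring_scope.
Local Open Scope classical_set_scope.

Lemma sqr_sum_le (R : realDomainType) n (x : 'I_n -> R) :
  (\sum_i x i) ^+ 2 <= n%:R * \sum_i x i ^+ 2.
Proof.
have expand : 2 * (\sum_i x i) ^+ 2 = \sum_i \sum_j 2 * x i * x j.
  rewrite expr2 mulr_suml mulr_sumr; apply: eq_bigr => i _.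
  by rewrite !mulr_sumr; apply: eq_bigr => j _; ring.
have spread : \sum_i \sum_(j < n) (x i ^+ 2 + x j ^+ 2)
              = 2 * (n%:R * \sum_i x i ^+ 2).
  rewrite (eq_bigr (fun i => n%:R * x i ^+ 2 + \sum_j x j ^+ 2)); last first.
    by move=> i _; rewrite big_split /= sumr_const card_ord mulr_natl.
  by rewrite big_split /= sumr_const card_ord -mulr_natl -mulr_sumr; ring.
rewrite -(ler_pM2l (ltr0Sn _ 1)) expand -spread.
apply: ler_sum => i _; apply: ler_sum => j _.
by have := sqr_ge0 (x i - x j); nra.
Qed.

Section WeightedInnerProduct.
Variables (R : realType) (n : nat) (g : 'rV[R]_n).
Implicit Types (u v w U V : 'cV[R]_n) (A : 'M[R]_n).

Definition wdot (u v : 'cV[R]_n) : R := (u^T *m diag_mx g *m v) 0 0.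

Lemma wdotE u v : wdot u v = \sum_i g 0 i * (u i 0 * v i 0).
Proof.
rewrite /wdot mul_mx_diag mxE; apply: eq_bigr => i _; rewrite !mxE; ring.
Qed.

Lemma wdotC u v : wdot u v = wdot v u.
Proof. by rewrite !wdotE; apply: eq_bigr => i _; ring. Qed.

Lemma wdot0l v : wdot 0 v = 0.
Proof. by rewrite /wdot trmx0 !mul0mx mxE. Qed.

Lemma wdotDr u v w : wdot u (v + w) = wdot u v + wdot u w.
Proof. by rewrite /wdot mulmxDr mxE. Qed.

Lemma wdotNr u v : wdot u (- v) = - wdot u v.
Proof. by rewrite /wdot mulmxN mxE. Qed.

Lemma wdotZr u k v : wdot u (k *: v) = k * wdot u v.
Proof. by rewrite /wdot -scalemxAr mxE. Qed.

Lemma wdotBr u v w : wdot u (v - w) = wdot u v - wdot u w.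
Proof. by rewrite wdotDr wdotNr. Qed.

Lemma wdotBl u v w : wdot (u - v) w = wdot u w - wdot v w.
Proof. by rewrite wdotC wdotBr !(wdotC w). Qed.

Lemma wdotZl k u v : wdot (k *: u) v = k * wdot u v.
Proof. by rewrite wdotC wdotZr wdotC. Qed.

Lemma derive1_wdot (W : R -> 'cV[R]_n) (W' : 'cV[R]_n) (t : R) :
  (forall i, is_derive t (1 : R) (fun s => W s i 0) (W' i 0)) ->
  derive1 (fun s => wdot (W s) (W s)) t = 2 * wdot (W t) W'.
Proof.
move=> dW.
have -> : (fun s => wdot (W s) (W s))
          = \sum_i (fun s => g 0 i * (W s i 0 * W s i 0)).
  by apply/funext => s; rewrite fct_sumE wdotE.
have dterm i : is_derive t (1 : R) (fun s => g 0 i * (W s i 0 * W s i 0))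
                 (g 0 i * (W t i 0 * W' i 0 + W t i 0 * W' i 0)).
  exact: is_deriveZ (is_deriveM (dW i) (dW i)).
have dsum := is_derive_sum dterm.
rewrite derive1E derive_val wdotE mulr_sumr.
by apply: eq_bigr => i _; ring.
Qed.

Hypothesis g_gt0 : forall i, 0 < g 0 i.

Lemma wdot_term_ge0 u i : 0 <= g 0 i * (u i 0 * u i 0).
Proof. by apply: mulr_ge0; [exact: ltW | rewrite -expr2 sqr_ge0]. Qed.

Lemma wdot_ge0 u : 0 <= wdot u u.
Proof. by rewrite wdotE; apply: sumr_ge0 => i _; apply: wdot_term_ge0. Qed.

Lemma wdot_entry_le u i : g 0 i * u i 0 ^+ 2 <= wdot u u.
Proof.
rewrite wdotE (bigD1 i) //= expr2 lerDl.
by apply: sumr_ge0 => j _; apply: wdot_term_ge0.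
Qed.

Lemma wdot_eq0 u : (wdot u u == 0) = (u == 0).
Proof.
apply/idP/eqP => [|->]; last by rewrite wdot0l.
rewrite wdotE psumr_eq0 => [/allP u0|i _]; last exact: wdot_term_ge0.
apply/matrixP => i j; rewrite (ord1 j) mxE.
have := u0 i (mem_index_enum _).
by rewrite mulf_eq0 (gt_eqF (g_gt0 i)) mulf_eq0 orbb => /eqP.
Qed.

Lemma wdot_gt0 u : u != 0 -> 0 < wdot u u.
Proof. by rewrite lt0r wdot_eq0 wdot_ge0 andbT. Qed.

Lemma wdot_le_of_sqr_le k u v :
  0 <= k -> wdot v v <= k ^+ 2 * wdot u u -> wdot u v <= k * wdot u u.
Proof.
move=> k_ge0 vu; have := wdot_ge0 (k *: u - v).
rewrite wdotBl !wdotBr !wdotZl !wdotZr (wdotC v u) => sq_ge0.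
have [k0|k_neq0] := eqVneq k 0.
  move: vu; rewrite k0 expr2 !mul0r => vv_le0.
  have /eqP -> : v == 0 by rewrite -wdot_eq0 eq_le vv_le0 wdot_ge0.
  by rewrite wdotC wdot0l.
have k_gt0 : 0 < k by rewrite lt0r k_neq0.
by rewrite -(ler_pM2l k_gt0); nra.
Qed.

(* Without this bound the [sup] defining [wopnorm] below would be a junk value. *)
Lemma wdot_mulmx_bounded (A : 'M[R]_n) :
  exists2 C, 0 <= C & forall u, wdot (A *m u) (A *m u) <= C * wdot u u.
Proof.
have gV_ge0 j : 0 <= (g 0 j)^-1 by rewrite invr_ge0 ltW.
exists (\sum_i g 0 i * (n%:R * \sum_j A i j ^+ 2 / g 0 j)) => [|u].
  apply: sumr_ge0 => i _; apply: mulr_ge0; first exact: ltW.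
  apply: mulr_ge0 => //; apply: sumr_ge0 => j _.
  by apply: mulr_ge0; first exact: sqr_ge0.
rewrite [leLHS]wdotE mulr_suml; apply: ler_sum => i _.
rewrite -expr2 -mulrA ler_pM2l // mxE.
apply: (le_trans (sqr_sum_le _)); rewrite -mulrA ler_wpM2l // mulr_suml.
apply: ler_sum => j _; rewrite exprMn -[leRHS]mulrA ler_wpM2l ?sqr_ge0 //.
by rewrite mulrC ler_pdivlMr // mulrC wdot_entry_le.
Qed.

Definition wratios A : set R := [set r | exists U : 'cV_n, U != 0 /\
  r = Num.sqrt (wdot (A *m U) (A *m U)) / Num.sqrt (wdot U U)].

Definition wopnorm A : R := sup (wratios A).

Lemma has_sup_wratios A U : U != 0 -> has_sup (wratios A).
Proof.
move=> U_neq0; have [C C_ge0 AC] := wdot_mulmx_bounded A.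
split; first by exists (Num.sqrt (wdot (A *m U) (A *m U)) / Num.sqrt (wdot U U)), U.
exists (Num.sqrt C) => _ [V [/wdot_gt0 V_gt0 ->]].
by rewrite ler_pdivrMr ?sqrtr_gt0 // -sqrtrM // ler_sqrt ?mulr_ge0 ?wdot_ge0.
Qed.

Lemma wratio_le_wopnorm A U : U != 0 ->
  Num.sqrt (wdot (A *m U) (A *m U)) / Num.sqrt (wdot U U) <= wopnorm A.
Proof. by move=> U_neq0; apply: (sup_upper_bound (has_sup_wratios A U_neq0)); exists U. Qed.

Lemma wopnorm_ge0 A U : U != 0 -> 0 <= wopnorm A.
Proof. by move=> U_neq0; apply: le_trans (wratio_le_wopnorm A U_neq0); rewrite divr_ge0 ?sqrtr_ge0. Qed.

Lemma wdot_mulmx_le_wopnorm A u : wdot (A *m u) (A *m u) <= wopnorm A ^+ 2 * wdot u u.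
Proof.
have [->|u_neq0] := eqVneq u 0; first by rewrite mulmx0 !wdot0l mulr0.
have := wratio_le_wopnorm A u_neq0.
rewrite ler_pdivrMr ?sqrtr_gt0 ?wdot_gt0 // -(ler_pXn2r (ltn0Sn 1)) ?nnegrE ?sqrtr_ge0 //.
  by rewrite exprMn !sqr_sqrtr ?wdot_ge0.
by rewrite mulr_ge0 ?sqrtr_ge0 ?(wopnorm_ge0 A u_neq0).
Qed.

Lemma wdot_mulmx_le A u : wdot u (A *m u) <= wopnorm A * wdot u u.
Proof.
have [->|u_neq0] := eqVneq u 0; first by rewrite !wdot0l mulr0.
exact: wdot_le_of_sqr_le (wopnorm_ge0 A u_neq0) (wdot_mulmx_le_wopnorm A u).
Qed.

End WeightedInnerProduct.

Lemma posdef_diag_gt0 (R : realType) n (A : 'M[R]_n) : posdef A -> forall i, 0 < A i i.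
Proof.
move=> A_pd i; have := A_pd (delta_mx i 0).
rewrite trmx_delta -rowE -colE !mxE; apply.
by apply/eqP => /matrixP/(_ i 0)/eqP; rewrite !mxE !eqxx oner_eq0.
Qed.

Lemma diag_mx_unit (R : numFieldType) n (g : 'rV[R]_n) :
  (forall i, 0 < g 0 i) -> diag_mx g \in unitmx.
Proof.
move=> g_gt0; rewrite unitmxE det_diag unitfE prodf_seq_neq0.
by apply/allP => i _; rewrite gt_eqF.
Qed.

Lemma wdot_invmx (R : realType) n (g : 'rV[R]_n) u x :
  (forall i, 0 < g 0 i) -> wdot g u (invmx (diag_mx g) *m x) = (u^T *m x) 0 0.
Proof. by move=> g_gt0; rewrite /wdot mulmxA mulmxK ?diag_mx_unit. Qed.

Lemma kron2_diag_mx (R : realType) n (h : 'rV[R]_n) :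
  kron2 (diag_mx h) = diag_mx (row_mx h h).
Proof. by rewrite diag_mx_row. Qed.

Lemma diagcE (R : realType) n (c w : 'cV[R]_n) i : (diagc c *m w) i 0 = c i 0 * w i 0.
Proof. by rewrite mul_diag_mx !mxE. Qed.

Lemma trmx_mul_delta (R : pzSemiRingType) n (u : 'cV[R]_n) k :
  (u^T *m delta_mx k (0 : 'I_1)) 0 0 = u k 0.
Proof. by rewrite -colE !mxE. Qed.

Lemma row_mx_gt0 (R : numDomainType) m n (h : 'rV[R]_m) (k : 'rV[R]_n) :
  (forall i, 0 < h 0 i) -> (forall i, 0 < k 0 i) -> forall i, 0 < row_mx h k 0 i.
Proof. by move=> h_gt0 k_gt0 i; rewrite mxE; case: splitP. Qed.

Lemma reflection_form_ge0 (R : realDomainType) (x y r : R) :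
  -1 <= r <= 1 -> 0 <= x ^+ 2 + y ^+ 2 - 2 * r * x * y.
Proof.
case/andP => r_ge r_le; have := sqr_ge0 (x - r * y).
have : 0 <= (1 - r ^+ 2) * y ^+ 2 by rewrite mulr_ge0 ?sqr_ge0 // subr_ge0 expr2; nra.
by rewrite !expr2; nra.
Qed.

Lemma quad_comm_sym (R : realType) n (H C D : 'M[R]_n) (w : 'cV[R]_n) :
  H *m C = C *m H -> C^T = C ->
  (w^T *m (H *m (C *m D) + H *m (D *m C)) *m w) 0 0
  = ((C *m w)^T *m (H *m D + (H *m D)^T) *m w) 0 0.
Proof.
move=> HC CT; rewrite !(mulmxDr, mulmxDl) mxE [RHS]mxE; congr (_ + _).
  by rewrite (mulmxA H) HC trmx_mul CT !mulmxA.
have -> : (C *m w)^T *m (H *m D)^T *m w = (w^T *m (H *m D) *m (C *m w))^T.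
  by rewrite !trmx_mul trmxK mulmxA.
by rewrite [RHS]mxE !mulmxA.
Qed.

Section SBPEnergy.
Variables (R : realType) (N : nat) (D : 'M[R]_N.+1) (h : 'rV[R]_N.+1).
Local Notation H := (diag_mx h).
Local Notation g := (row_mx h h).
Hypothesis sbp : forall u v : 'cV[R]_N.+1,
  (u^T *m (H *m D + (H *m D)^T) *m v) 0 0 = u ord_max 0 * v ord_max 0 - u ord0 0 * v ord0 0.

Lemma wdot_LamD2 (cb w1 w2 : 'cV[R]_N.+1) :
  wdot g (col_mx w1 w2) ((Lam cb *m kron2 D + kron2 D *m Lam cb) *m col_mx w1 w2)
  = cb ord0 0 * (w1 ord0 0 ^+ 2 - w2 ord0 0 ^+ 2)
    - cb ord_max 0 * (w1 ord_max 0 ^+ 2 - w2 ord_max 0 ^+ 2).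
Proof.
have commH c : H *m diagc c = diagc c *m H by exact: diag_mxC.
have symc c : (diagc c)^T = diagc c by rewrite tr_diag_mx.
rewrite /wdot -kron2_diag_mx /kron2 /Lam tr_col_mx !mulmx_block.
rewrite !(mul0mx, mulmx0, addr0, add0r) add_block_mx !(mul0mx, mulmx0, addr0, add0r).
rewrite mulmxA mul_row_block !(mul0mx, mulmx0, addr0, add0r).
rewrite mul_row_block !(mul0mx, mulmx0, addr0, add0r) mul_row_col mxE.
have -> : - diagc cb = diagc (- cb) by rewrite /diagc !raddfN.
rewrite -!(mulmxA _ H) !(mulmxDr H) !quad_comm_sym // !sbp !diagcE !mxE.
by rewrite !expr2; ring.
Qed.

Hypothesis h_gt0 : forall i, 0 < h 0 i.

Let g_gt0 := row_mx_gt0 h_gt0 h_gt0.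

Lemma wdot_sbp_rhs (cb a b c d w1 w2 : 'cV[R]_N.+1) (R0 RL : R) :
  let W := col_mx w1 w2 in
  wdot g W (sbp_rhs D H cb a b c d R0 RL W)
  = wdot g W (Btilde a b c d *m W) + 2^-1 * wdot g W (Mcbar D cb *m W)
    - 2^-1 * (cb ord0 0 * (w1 ord0 0 ^+ 2 + w2 ord0 0 ^+ 2 - 2 * R0 * w1 ord0 0 * w2 ord0 0)
      + cb ord_max 0 * (w1 ord_max 0 ^+ 2 + w2 ord_max 0 ^+ 2
                        - 2 * RL * w1 ord_max 0 * w2 ord_max 0)).
Proof.
move=> W; rewrite /sbp_rhs /LamD kron2_diag_mx !col_mxEu !col_mxEd.
rewrite !(wdotDr, wdotNr, wdotZr) !(wdot_invmx _ _ g_gt0).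
rewrite mulmxBl -!scalemxAl wdotBr !wdotZr wdot_LamD2.
rewrite tr_col_mx !mul_row_col !mulmx0 add0r addr0 !trmx_mul_delta.
by rewrite !expr2; field.
Qed.
End SBPEnergy.

Theorem mainTheorem3 (R : realType) (L : R) (N : nat)
  (D H : 'M[R]_N.+1) (cb a b c d : 'cV[R]_N.+1) (R0 RL : R)
  (W : R -> 'cV[R]_(N.+1 + N.+1)) :
  0 < L -> (1 <= N)%N ->
  is_diag_mx H -> posdef H ->
  (forall u v : 'cV[R]_N.+1,
     (u^T *m ((H *m D) + (H *m D)^T) *m v) 0 0
       = u ord_max 0 * v ord_max 0 - u ord0 0 * v ord0 0) ->
  (forall i, 0 < cb i 0) ->
  -1 <= R0 <= 1 -> -1 <= RL <= 1 ->
  (forall (t : R) i, is_derive t (1 : R) (fun s : R => W s i 0)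
                 (sbp_rhs D H cb a b c d R0 RL (W t) i 0)) ->
  forall t : R,
    derive1 (fun s => energy H (W s)) t
      <= 2 * (opnormH H (Btilde a b c d) + opnormH H (Mcbar D cb)) * energy H (W t).
Proof.
move=> _ _ /diag_mxP [h ->] H_pd sbp cb_gt0 R0_bnd RL_bnd dW t.
have h_gt0 i : 0 < h 0 i by have := posdef_diag_gt0 H_pd i; rewrite mxE eqxx mulr1n.
have g_gt0 := row_mx_gt0 h_gt0 h_gt0; set g := row_mx h h in g_gt0.
rewrite /opnormH /normH /energy kron2_diag_mx.
change (derive1 (fun s => wdot g (W s) (W s)) t <= 2 * (wopnorm g (Btilde a b c d)
  + wopnorm g (Mcbar D cb)) * wdot g (W t) (W t)).
rewrite (derive1_wdot _ (dW t)) -[W t]vsubmxK wdot_sbp_rhs //.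
set w := col_mx _ _; set w1 := usubmx (W t); set w2 := dsubmx (W t).
have oM_E_ge0 : 0 <= wopnorm g (Mcbar D cb) * wdot g w w.
  have [->|w_neq0] := eqVneq w 0; first by rewrite wdot0l mulr0.
  by rewrite mulr_ge0 ?wdot_ge0 ?(wopnorm_ge0 _ _ w_neq0).
have B_le := wdot_mulmx_le g_gt0 (Btilde a b c d) w.
have M_le := wdot_mulmx_le g_gt0 (Mcbar D cb) w.
have bnd0 := mulr_ge0 (ltW (cb_gt0 ord0)) (reflection_form_ge0 (w1 ord0 0) (w2 ord0 0) R0_bnd).
have bndN := mulr_ge0 (ltW (cb_gt0 ord_max))
  (reflection_form_ge0 (w1 ord_max 0) (w2 ord_max 0) RL_bnd).
lra.
Qed.
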